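(* The vector $\Gamma:=\big(\widehat\zeta-\Lambda\widehat\zeta,\ \Lambda\widehat\zeta-\Lambda^2\widehat\zeta\big)$ satisfies $\mathbf L\Gamma=\Gamma$, i.e. it is an eigenfunction of $\mathbf L$ with eigenvalue $1$. Moreover $\Gamma=-\frac{d}{dT}\Phi^T_{LP}\big|_{T=0}$, where $\Phi^T_{LP}(z):=\big((T+1)^{-1}\widehat\zeta(z(T+1)),\ \widehat\mu(z(T+1))\big)$ and $\widehat\mu:=\Lambda\widehat\zeta-\widehat\zeta$.
   Context: LP profile: $(\widehat\rho,\widehat\omega)$ real-analytic, even, solving $\widehat\rho'=-\frac{2y\widehat\rho\widehat\omega(\widehat\rho-\widehat\omega)}{1-y^2\widehat\omega^2}$, $\widehat\omega'=\frac{1-3\widehat\omega}{y}+\frac{2y\widehat\omega^2(\widehat\rho-\widehat\omega)}{1-y^2\widehat\omega^2}$, $\widehat\omega(0)=\frac13$, $\widehat\rho(0)>\frac13$. $\widehat\zeta$: increasing solution of $z\widehat\zeta'=\widehat\zeta\,\widehat\omega(\widehat\zeta)$ with $z^{-1/3}\widehat\zeta(z)\to1$ as $z\to0$; $C_{LP}:=\frac23\widehat\rho(0)$, so that $(z^2-\widehat\zeta_z^{-2})\widehat\zeta_{zz}+C_{LP}z\widehat\zeta^{-2}-2\widehat\zeta^{-1}=0$. $\widehat\partial_z:=z^{2/3}\partial_z$, $\widehat D_zf:=\partial_z(z^{2/3}f)$, $\Lambda:=z\partial_z$, $\widehat G:=(\widehat\partial_z\widehat\zeta)^{-2}$, $K\theta:=\widehat\partial_z(\widehat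 G\widehat D_z\theta)$, $\mathcal V:=\frac29z^{-2/3}\widehat G-2\widehat\zeta^{-2}+\frac43z^{-1/3}(\widehat\partial_z^2\widehat\zeta)\widehat G^{3/2}+2C_{LP}z\widehat\zeta^{-3}$, and $\mathbf L(\theta,\phi):=(\phi-\Lambda\theta+\theta,\ -\Lambda\phi+K\theta+\mathcal V\theta)$ (acting on smooth functions on $(0,\infty)$). *)

From Stdlib Require Import Reals.
From Coquelicot Require Import Coquelicot.
Open Scope R_scope.

Definition real_analytic (f : R -> R) : Prop :=
  forall x0 : R, exists r : R, 0 < r /\ exists a : nat -> R,
    forall y : R, Rabs (y - x0) < r -> is_pseries a (y - x0) (f y).

Definition even_fun (f : R -> R) : Prop := forall y, f (- y) = f y.

Definition LP_profile (rho om : R -> R) : Prop :=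
  real_analytic rho /\ real_analytic om /\ even_fun rho /\ even_fun om /\
  (forall y, y <> 0 -> 1 - y ^ 2 * om y ^ 2 <> 0 ->
     is_derive rho y (- (2 * y * rho y * om y * (rho y - om y)) / (1 - y ^ 2 * om y ^ 2)) /\
     is_derive om y ((1 - 3 * om y) / y
                     + (2 * y * om y ^ 2 * (rho y - om y)) / (1 - y ^ 2 * om y ^ 2))) /\
  om 0 = 1 / 3 /\ rho 0 > 1 / 3.

Definition LP_zeta (om zeta : R -> R) : Prop :=
  (forall z1 z2, 0 < z1 -> z1 < z2 -> zeta z1 < zeta z2) /\
  (forall z, 0 < z -> is_derive zeta z (zeta z * om (zeta z) / z)) /\
  filterlim (fun z => Rpower z (- (1 / 3)) * zeta z) (at_right 0) (locally 1).

Definition C_LP (rho : R -> R) : R := 2 / 3 * rho 0.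

(* Operators, acting on functions on (0,oo) (only evaluated at z > 0). *)
Definition hd (f : R -> R) : R -> R := fun z => Rpower z (2 / 3) * Derive f z.
Definition hD (f : R -> R) : R -> R := Derive (fun z => Rpower z (2 / 3) * f z).
Definition Lam (f : R -> R) : R -> R := fun z => z * Derive f z.

Definition hG (zeta : R -> R) : R -> R := fun z => / (hd zeta z) ^ 2.

Definition Kop (zeta : R -> R) (th : R -> R) : R -> R :=
  hd (fun z => hG zeta z * hD th z).

Definition Vpot (rho zeta : R -> R) : R -> R := fun z =>
  2 / 9 * Rpower z (- (2 / 3)) * hG zeta z
  - 2 * / (zeta z) ^ 2
  + 4 / 3 * Rpower z (- (1 / 3)) * hd (hd zeta) z * Rpower (hG zeta z) (3 / 2)
  + 2 * C_LP rho * z * / (zeta z) ^ 3.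

Definition Lop1 (th ph : R -> R) : R -> R := fun z => ph z - Lam th z + th z.
Definition Lop2 (rho zeta : R -> R) (th ph : R -> R) : R -> R :=
  fun z => - Lam ph z + Kop zeta th z + Vpot rho zeta z * th z.

Definition Gam1 (zeta : R -> R) : R -> R := fun z => zeta z - Lam zeta z.
Definition Gam2 (zeta : R -> R) : R -> R := fun z => Lam zeta z - Lam (Lam zeta) z.

Definition hmu (zeta : R -> R) : R -> R := fun z => Lam zeta z - zeta z.

(* Gamma is the infinitesimal generator of the scaling z |-> (T+1) z of the profile, so the
   derivative formulas are the chain rule, and the first component of L Gamma = Gamma holds for
   any twice differentiable function.  For the second component the ODE system is transported
   to zeta: (y^3 omega rho)' = y^2 rho and z zeta' = zeta omega(zeta) make
   zeta^3 omega(zeta) rho(zeta) / z constant, equal to C_LP / 2 by the behaviour at 0, so that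
   rho(zeta) = C_LP / (2 zeta^2 zeta'), and the rho-equation becomes
   Q := (z^2 - zeta'^-2) zeta'' + C_LP z zeta^-2 - 2 zeta^-1 = 0.  A direct computation gives
   (L Gamma - Gamma)_2 = Q + z Q' = (z Q)', which vanishes.
   The ODE system is only given off the sonic set 1 - y^2 omega^2 = 0; this set has empty
   interior in (0, oo), since otherwise the analytic function y omega(y) would be +-1 on an
   interval and hence, by analytic continuation, at y = 0.  So every identity derived from the
   ODE extends to (0, oo) by continuity. *)

From Stdlib Require Import Reals Lra Classical.
From Coquelicot Require Import Coquelicot.
Open Scope R_scope.

Ltac eta_reduce :=
  repeat match goal with
  | |- context [fun x : R => ?f x] => change (fun x : R => f x) with f
  end.

Lemma locally_of_abs_lt (P : R -> Prop) x r y : Rabs (y - x) < r ->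
  (forall t, Rabs (t - x) < r -> P t) -> locally y P.
Proof.
  intros Hy HP.
  assert (He : 0 < r - Rabs (y - x)) by lra.
  exists (mkposreal _ He). intros t Ht. apply HP.
  change (Rabs (t - y) < r - Rabs (y - x)) in Ht.
  replace (t - x) with ((t - y) + (y - x)) by ring.
  pose proof (Rabs_triang (t - y) (y - x)). lra.
Qed.

Lemma locally_of_pos (P : R -> Prop) x : 0 < x -> (forall t, 0 < t -> P t) -> locally x P.
Proof. intros Hx HP. exact (filter_imp _ _ HP (open_gt 0 x Hx)). Qed.

Lemma locally_interval (P : R -> Prop) a b y : a < y < b ->
  (forall t, a < t < b -> P t) -> locally y P.
Proof.
  intros Hy HP. apply (locally_of_abs_lt _ ((a + b) / 2) ((b - a) / 2) y).
  - apply Rabs_def1; lra.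
  - intros t Ht. apply Rabs_def2 in Ht. apply HP. lra.
Qed.

Lemma locally_continuous_lt (f : R -> R) x eps : continuous f x -> 0 < eps ->
  exists d : posreal, forall y, Rabs (y - x) < d -> Rabs (f y - f x) < eps.
Proof.
  intros Hc He. destruct (Hc _ (locally_ball (f x) (mkposreal _ He))) as [d Hd].
  exists d. intros y Hy. exact (Hd y Hy).
Qed.

Lemma continuous_const_on_right (g : R -> R) K d : continuous g 0 -> 0 < d ->
  (forall h, 0 < h < d -> g h = K) -> g 0 = K.
Proof.
  intros Hc Hd HK.
  apply (filterlim_locally_unique (F := at_right 0) g).
  - now apply filterlim_filter_le_1 with (2 := Hc), filter_le_within.
  - apply (filterlim_ext_loc (fun _ => K)); [|apply filterlim_const].
    exists (mkposreal _ Hd). intros h Hh Hpos. symmetry. apply HK. split; [exact Hpos|].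
    change (Rabs (h - 0) < d) in Hh. rewrite Rminus_0_r, Rabs_right in Hh; lra.
Qed.

Lemma at_right_0_lt (f : R -> R) l eps : filterlim f (at_right 0) (locally l) -> 0 < eps ->
  exists d : posreal, forall y, 0 < y < d -> Rabs (f y - l) < eps.
Proof.
  intros Hf He. destruct (Hf _ (locally_ball l (mkposreal _ He))) as [d Hd].
  exists d. intros y Hy. apply (Hd y); [|lra].
  change (Rabs (y - 0) < d). rewrite Rminus_0_r, Rabs_right; lra.
Qed.

Lemma filterlim_Rmult {T} {F : (T -> Prop) -> Prop} {FF : Filter F} (f g : T -> R) a b :
  filterlim f F (locally a) -> filterlim g F (locally b) ->
  filterlim (fun x => f x * g x) F (locally (a * b)).
Proof.
  intros Hf Hg. eapply filterlim_comp_2; [exact Hf | exact Hg |].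
  apply (filterlim_mult (K := R_AbsRing) a b).
Qed.

Lemma continuous_cube x : continuous (fun t : R => t ^ 3) x.
Proof.
  apply (ex_derive_continuous (K := R_AbsRing) (V := R_NormedModule)). auto_derive. exact I.
Qed.

Lemma is_derive_pos_of_increasing f x l : (forall a b, 0 < a -> a < b -> f a < f b) ->
  0 < x -> is_derive f x l -> 0 <= l.
Proof.
  intros Hinc Hx Hd. apply is_derive_Reals in Hd.
  apply Rnot_lt_le. intros Hl.
  destruct (Hd (- l / 2)) as [d Hdd]; [lra|].
  set (h := Rmin (d / 2) x).
  assert (Hh : 0 < h < d).
  { unfold h. pose proof (cond_pos d). pose proof (Rmin_l (d / 2) x).
    split; [apply Rmin_glb_lt|]; lra. }
  specialize (Hdd h ltac:(lra) ltac:(rewrite Rabs_right; lra)).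
  apply Rabs_def2 in Hdd.
  pose proof (Hinc x (x + h) Hx ltac:(lra)).
  assert (0 < (f (x + h) - f x) / h) by (apply Rdiv_lt_0_compat; lra).
  lra.
Qed.

Lemma is_derive_0_pos_const (g : R -> R) : (forall t, 0 < t -> is_derive g t 0) ->
  forall a b, 0 < a -> 0 < b -> g a = g b.
Proof.
  intros Hg a b Ha Hb.
  destruct (Rtotal_order a b) as [Hab | [-> | Hba]]; [| reflexivity |].
  - apply (eq_is_derive g a b); [intros t Ht; apply Hg; lra | exact Hab].
  - symmetry. apply (eq_is_derive g b a); [intros t Ht; apply Hg; lra | exact Hba].
Qed.

Lemma Rpower_is_derive a x : 0 < x -> is_derive (fun t => Rpower t a) x (a * Rpower x (a - 1)).
Proof. intros Hx. apply is_derive_Reals. now apply derivable_pt_lim_power. Qed.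

Lemma Rpower_ex_derive a x : 0 < x -> ex_derive (fun t => Rpower t a) x.
Proof. intros Hx. eexists. now apply Rpower_is_derive. Qed.

Lemma Rpower_Derive a x : 0 < x -> Derive (fun t => Rpower t a) x = a * Rpower x (a - 1).
Proof. intros Hx. now apply is_derive_unique, Rpower_is_derive. Qed.

Lemma Rpower_pos x a : 0 < Rpower x a.
Proof. apply exp_pos. Qed.

Lemma Rpower_cube_third x : 0 < x -> Rpower (x ^ 3) (1 / 3) = x.
Proof.
  intros Hx. rewrite <- (Rpower_pow 3 x Hx), Rpower_mult.
  replace (INR 3 * (1 / 3)) with 1 by (simpl; field). now apply Rpower_1.
Qed.

Lemma Rpower_cuberoot_pow x q (n : nat) : 0 < x -> 3 * q = INR n ->
  Rpower x q = Rpower x (1 / 3) ^ n.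
Proof.
  intros Hx Hq. rewrite <- Rpower_pow by apply Rpower_pos. rewrite Rpower_mult.
  f_equal. lra.
Qed.

Lemma Rpower_third_pow3 x : 0 < x -> Rpower x (1 / 3) ^ 3 = x.
Proof.
  intros Hx. rewrite <- (Rpower_cuberoot_pow x 1 3 Hx) by (simpl; lra). now apply Rpower_1.
Qed.

Lemma Rpower_cuberoot_inv x q (n : nat) : 0 < x -> 3 * q = - INR n ->
  Rpower x q = / Rpower x (1 / 3) ^ n.
Proof.
  intros Hx Hq. rewrite <- Rpower_pow by apply Rpower_pos.
  rewrite Rpower_mult, <- Rpower_Ropp. f_equal. lra.
Qed.

Lemma Rpower_inv_sq_three_halves p : 0 < p -> Rpower (/ p ^ 2) (3 / 2) = / p ^ 3.
Proof.
  intros Hp. unfold Rpower. rewrite ln_Rinv, ln_pow by (try apply pow_lt; lra).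
  replace (3 / 2 * - (INR 2 * ln p)) with (- (INR 3 * ln p)) by (simpl; field).
  rewrite exp_Ropp. f_equal. fold (Rpower p (INR 3)). now apply Rpower_pow.
Qed.

(** * Real-analytic functions *)

Lemma CV_radius_ge_of_ex_pseries (a : nat -> R) (r : R) :
  (forall h, 0 <= h < r -> ex_pseries a h) -> Rbar_le r (CV_radius a).
Proof.
  intros Hex.
  assert (Hle : forall h, 0 <= h < r -> Rbar_le h (CV_radius a)).
  { intros h Hh. apply (proj1 (CV_radius_bounded a)).
    assert (Hlim : is_lim_seq (fun n => a n * h ^ n) 0).
    { apply (is_lim_seq_ext (fun n => scal (pow_n h n) (a n))).
      - intros n. rewrite pow_n_pow. apply Rmult_comm.
      - now apply ex_series_lim_0, Hex. }
    destruct (filterlim_bounded (fun n => a n * h ^ n)) as [M HM].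
    - exists 0. exact Hlim.
    - now exists M. }
  destruct (Rbar_le_lt_dec r (CV_radius a)) as [|Hlt]; [assumption|exfalso].
  pose proof (CV_radius_ge_0 a) as H0.
  destruct (CV_radius a) as [l| |]; simpl in *; try contradiction.
  assert (Hmid : (l + r) / 2 <= l) by (apply Hle; lra). lra.
Qed.

Lemma real_analytic_local_PSeries f : real_analytic f -> forall x, exists r, 0 < r /\
  exists a, Rbar_le r (CV_radius a) /\
    forall y, Rabs (y - x) < r -> f y = PSeries a (y - x).
Proof.
  intros Hf x. destruct (Hf x) as [r [Hr [a Ha]]].
  exists r; split; [exact Hr|]. exists a; split.
  - apply CV_radius_ge_of_ex_pseries. intros h Hh. exists (f (x + h)).
    pose proof (Ha (x + h)) as Hxh. replace (x + h - x) with h in Hxh by ring.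
    apply Hxh. rewrite Rabs_right; lra.
  - intros y Hy. symmetry. apply is_pseries_unique. now apply Ha.
Qed.

Lemma is_derive_shifted_PSeries f x (r : R) a : Rbar_le r (CV_radius a) ->
  (forall y, Rabs (y - x) < r -> f y = PSeries a (y - x)) ->
  forall y, Rabs (y - x) < r -> is_derive f y (PSeries (PS_derive a) (y - x)).
Proof.
  intros Hra Hf y Hy.
  apply (is_derive_ext_loc (fun t => PSeries a (t - x))).
  - apply (locally_of_abs_lt _ x r y Hy). intros t Ht. symmetry. now apply Hf.
  - replace (PSeries (PS_derive a) (y - x)) with (1 * PSeries (PS_derive a) (y - x)) by ring.
    apply (is_derive_comp (PSeries a) (fun t => t - x)).
    + apply is_derive_PSeries. eapply Rbar_lt_le_trans; [|exact Hra]. exact Hy.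
    + auto_derive; auto.
Qed.

Lemma real_analytic_ex_derive f : real_analytic f -> forall x, ex_derive f x.
Proof.
  intros Hf x. destruct (real_analytic_local_PSeries f Hf x) as [r [Hr [a [Ha Hrep]]]].
  eexists. apply (is_derive_shifted_PSeries f x r a Ha Hrep).
  rewrite Rminus_diag, Rabs_R0; lra.
Qed.

Lemma real_analytic_ex_derive2 f : real_analytic f -> forall x, ex_derive (Derive f) x.
Proof.
  intros Hf x. destruct (real_analytic_local_PSeries f Hf x) as [r [Hr [a [Ha Hrep]]]].
  eexists. apply (is_derive_shifted_PSeries (Derive f) x r (PS_derive a)).
  - now rewrite CV_radius_derive.
  - intros y Hy. apply is_derive_unique. now apply (is_derive_shifted_PSeries f x r a).
  - rewrite Rminus_diag, Rabs_R0; lra.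
Qed.

Lemma real_analytic_continuous f : real_analytic f -> forall x, continuous f x.
Proof.
  intros Hf x. apply (ex_derive_continuous (K := R_AbsRing) (V := R_NormedModule)).
  now apply real_analytic_ex_derive.
Qed.

Lemma real_analytic_mul_id f : real_analytic f -> real_analytic (fun y => y * f y).
Proof.
  intros Hf x0. destruct (Hf x0) as [r [Hr [a Ha]]].
  exists r; split; [exact Hr|]. exists (PS_plus (PS_scal x0 a) (PS_incr_1 a)).
  intros y Hy. replace (y * f y) with (plus (scal x0 (f y)) (scal (y - x0) (f y)))
    by (unfold plus, scal; simpl; unfold mult; simpl; ring).
  apply (is_pseries_plus (K := R_AbsRing) (V := R_NormedModule)).
  - apply (is_pseries_scal (K := R_AbsRing) (V := R_NormedModule));
      [apply Rmult_comm | now apply Ha].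
  - apply (is_pseries_incr_1 (K := R_AbsRing) (V := R_NormedModule)). now apply Ha.
Qed.

Lemma PSeries_const_of_const_on_right (c : nat -> R) (r K d : R) :
  Rbar_le r (CV_radius c) -> 0 < d -> (forall h, 0 < h < d -> PSeries c h = K) ->
  forall x, Rabs x < r -> PSeries c x = K.
Proof.
  intros Hrad Hd HK x Hx.
  assert (Hin : forall y, Rabs y < r -> Rbar_lt (Rabs y) (CV_radius c)).
  { intros y Hy. eapply Rbar_lt_le_trans; [|exact Hrad]. exact Hy. }
  assert (Hr : 0 < r) by (pose proof (Rabs_pos x); lra).
  set (d' := Rmin d r).
  assert (Hd' : 0 < d' <= d /\ d' <= r)
    by (unfold d'; repeat split; [apply Rmin_glb_lt | apply Rmin_l | apply Rmin_r]; lra).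
  assert (Hin0 : Rbar_lt 0 (CV_radius c))
    by (rewrite <- Rabs_R0; apply Hin; rewrite Rabs_R0; lra).
  assert (Hcont : forall a, CV_radius a = CV_radius c -> continuous (PSeries a) 0).
  { intros a Ha. apply continuity_pt_filterlim, PSeries_continuity.
    rewrite Ha, Rabs_R0. exact Hin0. }
  assert (Hcoef : forall n, c (S n) = 0).
  { intros n.
    assert (Hzero : PSeries (PS_derive_n (S n) c) 0 = 0).
    { apply (continuous_const_on_right _ 0 d' (Hcont _ (CV_radius_derive_n _ _)));
        [lra|].
      intros h Hh. rewrite <- Derive_n_PSeries by (apply Hin; rewrite Rabs_right; lra).
      rewrite (Derive_n_ext_loc _ (fun _ => K)) by
        (apply (locally_interval _ 0 d' h Hh); intros t Ht; apply HK; lra).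
      apply Derive_n_const. }
    rewrite <- Derive_n_PSeries, Derive_n_coef in Hzero by (rewrite ?Rabs_R0; exact Hin0).
    apply Rmult_integral in Hzero. destruct Hzero as [|Hfact]; [assumption|].
    exfalso. exact (INR_fact_neq_0 _ Hfact). }
  assert (Hc0 : c 0%nat = K).
  { rewrite <- PSeries_0. apply (continuous_const_on_right _ K d' (Hcont c eq_refl)); [lra|].
    intros h Hh. apply HK. lra. }
  rewrite PSeries_decr_1 by (apply CV_radius_inside, Hin, Hx).
  rewrite (PSeries_ext _ (fun _ => 0)) by (intros n; apply Hcoef).
  rewrite PSeries_const_0, Hc0. ring.
Qed.

Lemma real_analytic_const_extend_left g s a b : real_analytic g -> a < b ->
  (forall y, a < y < b -> g y = s) -> forall y, y < b -> g y = s.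
Proof.
  intros Hg Hab Hs.
  set (E := fun u => 0 <= u /\ forall y, b - u < y < b -> g y = s).
  assert (HE : E (b - a)) by (split; [lra|intros y Hy; apply Hs; lra]).
  assert (Hunb : ~ bound E).
  { intros Hbd. destruct (completeness E Hbd (ex_intro _ _ HE)) as [m [Hub Hlub]].
    assert (Hm : b - a <= m) by now apply Hub.
    assert (Hleft : forall y, b - m < y < b -> g y = s).
    { intros y Hy. apply NNPP. intros Hne.
      assert (Hbnd : is_upper_bound E (b - y)).
      { intros u [Hu HEu]. apply Rnot_lt_le. intros Hlt. apply Hne, HEu. lra. }
      specialize (Hlub _ Hbnd). lra. }
    set (t := b - m).
    destruct (real_analytic_local_PSeries g Hg t) as [r [Hr [c [Hrad Hrep]]]].
    assert (Hdisk : forall x, Rabs x < r -> PSeries c x = s).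
    { apply (PSeries_const_of_const_on_right c r s (Rmin r m) Hrad);
        [apply Rmin_glb_lt; lra|].
      intros h Hh. pose proof (Rmin_l r m). pose proof (Rmin_r r m).
      replace h with (t + h - t) by ring.
      rewrite <- Hrep by (replace (t + h - t) with h by ring; rewrite Rabs_right; lra).
      apply Hleft. unfold t. lra. }
    assert (HEm : E (m + r / 2)).
    { split; [lra|]. intros y Hy. destruct (Rlt_dec t y) as [Hty|Hty].
      - apply Hleft. unfold t in Hty. lra.
      - rewrite Hrep by (apply Rabs_def1; unfold t in *; lra).
        apply Hdisk. apply Rabs_def1; unfold t in *; lra. }
    specialize (Hub _ HEm). lra. }
  intros y Hy. apply NNPP. intros Hne. apply Hunb. exists (b - y).
  intros u [Hu HEu]. apply Rnot_lt_le. intros Hlt. apply Hne, HEu. lra.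
Qed.

Ltac analytic_ex_derive :=
  match goal with
  | |- ex_derive (fun x => Derive ?f x) _ => apply real_analytic_ex_derive2; assumption
  | |- ex_derive ?f _ => apply real_analytic_ex_derive; assumption
  end.

(** * The Larson-Penston ODE off the sonic set *)

Section LPProfile.

Variables rho om : R -> R.
Hypothesis HP : LP_profile rho om.

Lemma LP_nonsonic_point_between a b : 0 < a < b ->
  exists y, a < y < b /\ 1 - y ^ 2 * om y ^ 2 <> 0.
Proof.
  intros Hab. apply NNPP. intros Hno.
  assert (Hsing : forall y, a < y < b -> (y * om y) ^ 2 = 1).
  { intros y Hy. apply NNPP. intros Hne. apply Hno. exists y. split; [exact Hy|].
    intros H. apply Hne. lra. }
  destruct HP as [_ [Hom _]].
  set (g := fun y => y * om y).
  assert (Hg : real_analytic g) by now apply real_analytic_mul_id.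
  set (c := (a + b) / 2). set (s := g c).
  assert (Hs2 : s ^ 2 = 1) by (apply Hsing; unfold c; lra).
  destruct (locally_continuous_lt g c 1 (real_analytic_continuous g Hg c) Rlt_0_1)
    as [d Hd].
  set (d' := Rmin d ((b - a) / 2)).
  assert (Hd' : 0 < d' <= d /\ d' <= (b - a) / 2).
  { unfold d'. pose proof (cond_pos d).
    repeat split; [apply Rmin_glb_lt | apply Rmin_l | apply Rmin_r]; lra. }
  assert (Hconst : forall y, c - d' < y < c + d' -> g y = s).
  { intros y Hy.
    assert (Hgy : Rabs (g y - s) < 1) by (apply Hd, Rabs_def1; lra).
    apply Rabs_def2 in Hgy.
    assert (Hy2 : g y ^ 2 = 1) by (apply Hsing; unfold c in *; lra).
    assert (Hgys : g y * s = 1).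
    { assert (Hprod : (g y * s - 1) * (g y * s + 1) = 0) by nra.
      assert (Hpos : g y * s > 1 / 2) by nra.
      apply Rmult_integral in Hprod. lra. }
    transitivity (g y * s ^ 2); [rewrite Hs2; ring|].
    replace (g y * s ^ 2) with (g y * s * s) by ring. rewrite Hgys. ring. }
  assert (Hg0 : g 0 = s).
  { apply (real_analytic_const_extend_left g s (c - d') (c + d') Hg);
      [lra | exact Hconst | unfold c; lra]. }
  unfold g in Hg0. rewrite Rmult_0_l in Hg0. rewrite <- Hg0 in Hs2. lra.
Qed.

Lemma LP_eq0_of_eq0_nonsonic (h : R -> R) :
  (forall y, 0 < y -> continuous h y) ->
  (forall y, 0 < y -> 1 - y ^ 2 * om y ^ 2 <> 0 -> h y = 0) ->
  forall y, 0 < y -> h y = 0.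
Proof.
  intros Hc Hreg y Hy. apply NNPP. intros Hne.
  destruct (locally_continuous_lt h y (Rabs (h y)) (Hc y Hy))
    as [d Hd]; [now apply Rabs_pos_lt|].
  destruct (LP_nonsonic_point_between y (y + d)) as [y' [Hy' Hreg']].
  { pose proof (cond_pos d). lra. }
  assert (Hclose : Rabs (h y' - h y) < Rabs (h y)) by (apply Hd, Rabs_def1; lra).
  rewrite (Hreg y') in Hclose by (auto; lra).
  rewrite Rminus_0_l, Rabs_Ropp in Hclose. lra.
Qed.

Lemma LP_is_derive_cube_om_rho y : 0 < y ->
  is_derive (fun y => y ^ 3 * om y * rho y) y (y ^ 2 * rho y).
Proof.
  intros Hy. pose proof HP as [Hrho [Hom [_ [_ [Hode _]]]]].
  assert (Hres : forall t, 0 < t -> 3 * t ^ 2 * om t * rho t + t ^ 3 * Derive om t * rho t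
                                 + t ^ 3 * om t * Derive rho t - t ^ 2 * rho t = 0).
  { apply LP_eq0_of_eq0_nonsonic.
    - intros t _. apply (ex_derive_continuous (K := R_AbsRing) (V := R_NormedModule)).
      auto_derive. repeat split; analytic_ex_derive.
    - intros t Ht Hreg. destruct (Hode t ltac:(lra) Hreg) as [Hr Ho].
      rewrite (is_derive_unique _ _ _ Hr), (is_derive_unique _ _ _ Ho). field. lra. }
  auto_derive; [repeat split; analytic_ex_derive|].
  eta_reduce. specialize (Hres y Hy). lra.
Qed.

Lemma LP_rho_ode : forall y, 0 < y ->
  (1 - y ^ 2 * om y ^ 2) * Derive rho y + 2 * y * rho y * om y * (rho y - om y) = 0.
Proof.
  pose proof HP as [Hrho [Hom [_ [_ [Hode _]]]]].
  apply LP_eq0_of_eq0_nonsonic.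
  - intros t _. apply (ex_derive_continuous (K := R_AbsRing) (V := R_NormedModule)).
    auto_derive. repeat split; analytic_ex_derive.
  - intros t Ht Hreg. destruct (Hode t ltac:(lra) Hreg) as [Hr _].
    rewrite (is_derive_unique _ _ _ Hr). field. rewrite Rpow_mult_distr. exact Hreg.
Qed.

End LPProfile.

(** * The vector Gamma *)

Section Gamma.

Variables (f : R -> R) (z : R).
Hypothesis Hf1 : ex_derive f z.
Hypothesis Hf2 : ex_derive (Derive f) z.

Lemma Derive_Lam : Derive (Lam f) z = Derive f z + z * Derive (Derive f) z.
Proof.
  unfold Lam. apply is_derive_unique. auto_derive; [exact Hf2|]. eta_reduce. ring.
Qed.

Lemma Gam2_eq : Gam2 f z = - z ^ 2 * Derive (Derive f) z.
Proof. unfold Gam2. unfold Lam at 2. rewrite Derive_Lam. unfold Lam. ring. Qed.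

Lemma Derive_Gam1 : Derive (Gam1 f) z = - z * Derive (Derive f) z.
Proof.
  unfold Gam1, Lam. apply is_derive_unique.
  auto_derive; [repeat split; [exact Hf1 | exact Hf2]|]. eta_reduce. ring.
Qed.

Lemma Lop1_Gam : Lop1 (Gam1 f) (Gam2 f) z = Gam1 f z.
Proof. unfold Lop1. unfold Lam at 1. rewrite Derive_Gam1, Gam2_eq. ring. Qed.

Lemma is_derive_dilation :
  is_derive (fun T => / (T + 1) * f (z * (T + 1))) 0 (- Gam1 f z).
Proof.
  auto_derive; replace (z * (0 + 1)) with z by ring; [repeat split; [lra | exact Hf1]|].
  unfold Gam1, Lam. eta_reduce. field.
Qed.

Lemma is_derive_hmu_dilation : is_derive (fun T => hmu f (z * (T + 1))) 0 (- Gam2 f z).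
Proof.
  unfold hmu, Lam. auto_derive; replace (z * (0 + 1)) with z by ring;
    [repeat split; [exact Hf2 | exact Hf1]|].
  rewrite Gam2_eq. eta_reduce. ring.
Qed.

End Gamma.

(** * The profile zeta *)

Definition LP_zeta_ode_lhs (C : R) (zeta : R -> R) (z : R) : R :=
  (z ^ 2 - / Derive zeta z ^ 2) * Derive (Derive zeta) z + C * z / zeta z ^ 2 - 2 / zeta z.

Section Zeta.

Variables rho om zeta : R -> R.
Hypothesis HP : LP_profile rho om.
Hypothesis HZ : LP_zeta om zeta.

Lemma zeta_pos z : 0 < z -> 0 < zeta z.
Proof.
  intros Hz. destruct HZ as [Hinc [_ Hlim]].
  destruct (at_right_0_lt _ _ _ Hlim Rlt_0_1) as [d Hd].
  set (z0 := Rmin (d / 2) (z / 2)).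
  assert (Hz0 : 0 < z0 < d /\ z0 < z).
  { unfold z0. pose proof (cond_pos d). pose proof (Rmin_l (d / 2) (z / 2)).
    pose proof (Rmin_r (d / 2) (z / 2)).
    assert (0 < Rmin (d / 2) (z / 2)) by (apply Rmin_glb_lt; lra). lra. }
  specialize (Hd z0 (proj1 Hz0)). apply Rabs_def2 in Hd.
  pose proof (Rpower_pos z0 (- (1 / 3))).
  assert (0 < zeta z0).
  { apply Rnot_le_lt. intros Hn.
    assert (Rpower z0 (- (1 / 3)) * zeta z0 <= 0) by (apply Rmult_le_0_l; lra). lra. }
  pose proof (Hinc z0 z ltac:(lra) ltac:(lra)). lra.
Qed.

Lemma zeta_at_right_0 : filterlim zeta (at_right 0) (locally 0).
Proof.
  intros P [e He]. destruct HZ as [_ [_ Hlim]].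
  destruct (at_right_0_lt _ _ _ Hlim Rlt_0_1) as [d Hd].
  assert (He2 : 0 < e / 2) by (pose proof (cond_pos e); lra).
  assert (Hd2 : 0 < Rmin d ((e / 2) ^ 3))
    by (apply Rmin_glb_lt; [apply cond_pos | apply pow_lt; lra]).
  exists (mkposreal _ Hd2). intros w Hw Hw0. simpl in Hw0.
  change (Rabs (w - 0) < Rmin d ((e / 2) ^ 3)) in Hw.
  rewrite Rminus_0_r, Rabs_right in Hw by lra.
  pose proof (Rmin_l d ((e / 2) ^ 3)). pose proof (Rmin_r d ((e / 2) ^ 3)).
  apply He. change (Rabs (zeta w - 0) < e). rewrite Rminus_0_r.
  specialize (Hd w ltac:(lra)). apply Rabs_def2 in Hd.
  assert (Hsplit : zeta w = Rpower w (1 / 3) * (Rpower w (- (1 / 3)) * zeta w)).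
  { rewrite <- Rmult_assoc, <- Rpower_plus. replace (1 / 3 + - (1 / 3)) with 0 by ring.
    rewrite Rpower_O by lra. ring. }
  assert (Hroot : Rpower w (1 / 3) < e / 2).
  { rewrite <- (Rpower_cube_third (e / 2)) by lra. apply Rlt_Rpower_l; lra. }
  pose proof (Rpower_pos w (1 / 3)). pose proof (zeta_pos w Hw0).
  rewrite Rabs_right, Hsplit by lra.
  assert (Rpower w (1 / 3) * (Rpower w (- (1 / 3)) * zeta w) <= Rpower w (1 / 3) * 2)
    by (apply Rmult_le_compat_l; lra).
  lra.
Qed.

Lemma zeta_is_derive w : 0 < w -> is_derive zeta w (zeta w * om (zeta w) / w).
Proof. intros Hw. now apply HZ. Qed.

Lemma Derive_zeta w : 0 < w -> Derive zeta w = zeta w * om (zeta w) / w.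
Proof. intros Hw. now apply is_derive_unique, zeta_is_derive. Qed.

Lemma zeta_ex_derive w : 0 < w -> ex_derive zeta w.
Proof. intros Hw. eexists. now apply zeta_is_derive. Qed.

Lemma Derive_zeta_is_derive w : 0 < w -> is_derive (Derive zeta) w
  (Derive zeta w * (om (zeta w) + zeta w * Derive om (zeta w) - 1) / w).
Proof.
  intros Hw. pose proof HP as [_ [Hom _]].
  apply (is_derive_ext_loc (fun t => zeta t * om (zeta t) / t)).
  - apply (locally_of_pos _ w Hw). intros t Ht. symmetry. now apply Derive_zeta.
  - auto_derive.
    + repeat split; try analytic_ex_derive; try lra; now apply zeta_ex_derive.
    + eta_reduce. rewrite (Derive_zeta w Hw). field. lra.
Qed.

Lemma zeta_ex_derive2 w : 0 < w -> ex_derive (Derive zeta) w.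
Proof. intros Hw. eexists. now apply Derive_zeta_is_derive. Qed.

Lemma zeta_ex_derive3 w : 0 < w -> ex_derive (Derive (Derive zeta)) w.
Proof.
  intros Hw. pose proof HP as [_ [Hom _]].
  apply (ex_derive_ext_loc
    (fun t => Derive zeta t * (om (zeta t) + zeta t * Derive om (zeta t) - 1) / t)).
  - apply (locally_of_pos _ w Hw). intros t Ht. symmetry.
    now apply is_derive_unique, Derive_zeta_is_derive.
  - auto_derive. repeat split; try analytic_ex_derive; try lra;
      [apply zeta_ex_derive2 | apply zeta_ex_derive ..]; exact Hw.
Qed.

Ltac zeta_ex_derive_tac :=
  match goal with
  | |- ex_derive (fun x => Derive (Derive zeta) x) _ => apply zeta_ex_derive3; lra
  | |- ex_derive (fun x => Derive zeta x) _ => apply zeta_ex_derive2; lra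
  | |- ex_derive (fun x => zeta x) _ => apply zeta_ex_derive; lra
  | |- ex_derive (fun x => Rpower x _) _ => apply Rpower_ex_derive; lra
  | _ => analytic_ex_derive
  end.

Lemma zeta_first_integral w : 0 < w ->
  zeta w ^ 3 * om (zeta w) * rho (zeta w) = C_LP rho / 2 * w.
Proof.
  intros Hw. pose proof HP as [Hrho [Hom [_ [_ [_ [Hom0 _]]]]]].
  set (Q := fun t => zeta t ^ 3 * om (zeta t) * rho (zeta t) / t).
  assert (HQ' : forall t, 0 < t -> is_derive Q t 0).
  { intros t Ht. pose proof (zeta_pos t Ht) as Hzt.
    assert (Hnum : is_derive (fun s => zeta s ^ 3 * om (zeta s) * rho (zeta s)) t
                     (zeta t * om (zeta t) / t * (zeta t ^ 2 * rho (zeta t)))).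
    { replace (zeta t * om (zeta t) / t * (zeta t ^ 2 * rho (zeta t)))
        with (scal (zeta t * om (zeta t) / t) (zeta t ^ 2 * rho (zeta t))) by reflexivity.
      apply (is_derive_comp (fun y => y ^ 3 * om y * rho y) zeta).
      - now apply LP_is_derive_cube_om_rho.
      - now apply zeta_is_derive. }
    replace 0 with ((zeta t * om (zeta t) / t * (zeta t ^ 2 * rho (zeta t)) * t
                     - zeta t ^ 3 * om (zeta t) * rho (zeta t) * 1) / t ^ 2)
      by (field; lra).
    unfold Q.
    apply (is_derive_div (fun s => zeta s ^ 3 * om (zeta s) * rho (zeta s)) (fun s => s));
      [exact Hnum | auto_derive; auto | lra]. }
  assert (Hlim : filterlim Q (at_right 0) (locally (1 ^ 3 * om 0 * rho 0))).
  { apply (filterlim_ext_loc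
      (fun t => (Rpower t (- (1 / 3)) * zeta t) ^ 3 * om (zeta t) * rho (zeta t))).
    - exists (mkposreal 1 Rlt_0_1). intros t _ Ht. unfold Q.
      rewrite Rpow_mult_distr, <- (Rpower_pow 3 _ (Rpower_pos _ _)), Rpower_mult.
      replace (- (1 / 3) * INR 3) with (- (1)) by (simpl; field).
      rewrite Rpower_Ropp, Rpower_1 by exact Ht. field. lra.
    - destruct HZ as [_ [_ Hlim0]].
      apply filterlim_Rmult; [apply filterlim_Rmult|].
      + exact (filterlim_comp _ _ _ _ _ _ _ _ Hlim0 (continuous_cube 1)).
      + exact (filterlim_comp _ _ _ _ _ _ _ _ zeta_at_right_0
                 (real_analytic_continuous om Hom 0)).
      + exact (filterlim_comp _ _ _ _ _ _ _ _ zeta_at_right_0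
                 (real_analytic_continuous rho Hrho 0)). }
  assert (HQw : Q w = 1 ^ 3 * om 0 * rho 0).
  { apply (filterlim_locally_unique (F := at_right 0) Q); [|exact Hlim].
    apply (filterlim_ext_loc (fun _ => Q w)); [|apply filterlim_const].
    exists (mkposreal 1 Rlt_0_1). intros t _ Ht.
    apply (is_derive_0_pos_const Q HQ' w t Hw Ht). }
  unfold Q in HQw. rewrite Hom0 in HQw. unfold C_LP.
  apply (Rmult_eq_compat_r w) in HQw. unfold Rdiv at 1 in HQw.
  rewrite Rmult_assoc, Rinv_l, Rmult_1_r in HQw by lra. lra.
Qed.

Lemma C_LP_pos : 0 < C_LP rho.
Proof. pose proof HP as [_ [_ [_ [_ [_ [_ Hrho0]]]]]]. unfold C_LP. lra. Qed.

Lemma Derive_zeta_pos w : 0 < w -> 0 < Derive zeta w.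
Proof.
  intros Hw.
  destruct (is_derive_pos_of_increasing zeta w (Derive zeta w) (proj1 HZ) Hw
              (Derive_correct _ _ (zeta_ex_derive w Hw))) as [|H0]; [assumption|].
  exfalso. pose proof (zeta_first_integral w Hw) as HF.
  pose proof (zeta_pos w Hw). pose proof C_LP_pos.
  rewrite (Derive_zeta w Hw) in H0.
  assert (Hom0 : om (zeta w) = 0).
  { replace (om (zeta w)) with (zeta w * om (zeta w) / w * (w / zeta w)) by (field; lra).
    rewrite <- H0. ring. }
  rewrite Hom0 in HF. nra.
Qed.

Lemma om_zeta w : 0 < w -> om (zeta w) = w * Derive zeta w / zeta w.
Proof. intros Hw. pose proof (zeta_pos w Hw). rewrite (Derive_zeta w Hw). field. lra. Qed.

Lemma rho_zeta w : 0 < w -> rho (zeta w) = C_LP rho / (2 * zeta w ^ 2 * Derive zeta w).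
Proof.
  intros Hw. pose proof (zeta_pos w Hw). pose proof (Derive_zeta_pos w Hw).
  pose proof (zeta_first_integral w Hw) as HF. rewrite (om_zeta w Hw) in HF.
  assert (Hpos : 0 < 2 * zeta w ^ 2 * Derive zeta w * w)
    by (repeat apply Rmult_lt_0_compat; try apply pow_lt; lra).
  apply (Rmult_eq_reg_l (2 * zeta w ^ 2 * Derive zeta w * w)); [|lra].
  transitivity (2 * (zeta w ^ 3 * (w * Derive zeta w / zeta w) * rho (zeta w))).
  - field. lra.
  - rewrite HF. field. lra.
Qed.

Lemma zeta_ode z : 0 < z -> LP_zeta_ode_lhs (C_LP rho) zeta z = 0.
Proof.
  intros Hz. pose proof HP as [Hrho [Hom _]].
  pose proof (zeta_pos z Hz). pose proof (Derive_zeta_pos z Hz). pose proof C_LP_pos.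
  assert (Hchain : Derive rho (zeta z) * Derive zeta z =
    - C_LP rho * (2 * Derive zeta z ^ 2 + zeta z * Derive (Derive zeta) z)
      / (2 * zeta z ^ 3 * Derive zeta z ^ 2)).
  { transitivity (Derive (fun t => rho (zeta t)) z).
    - symmetry. apply is_derive_unique. auto_derive; [repeat split; zeta_ex_derive_tac|].
      eta_reduce. ring.
    - rewrite (Derive_ext_loc _ (fun t => C_LP rho / (2 * zeta t ^ 2 * Derive zeta t))).
      + apply is_derive_unique. auto_derive.
        * repeat split; try zeta_ex_derive_tac.
          apply Rgt_not_eq. repeat apply Rmult_lt_0_compat; lra.
        * eta_reduce. field. lra.
      + apply (locally_of_pos _ z Hz). exact rho_zeta. }
  pose proof (LP_rho_ode rho om HP (zeta z) (zeta_pos z Hz)) as Hode.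
  rewrite (rho_zeta z Hz), (om_zeta z Hz) in Hode.
  (* after these substitutions the rho-equation is C_LP / (2 zeta^2 zeta') times the
     zeta-equation *)
  match type of Hode with ?E = 0 =>
    transitivity (2 * zeta z ^ 2 * Derive zeta z / C_LP rho * E); [|rewrite Hode; ring] end.
  unfold LP_zeta_ode_lhs.
  replace (Derive rho (zeta z)) with (Derive rho (zeta z) * Derive zeta z / Derive zeta z)
    by (field; lra).
  rewrite Hchain. field. repeat split; lra.
Qed.

Lemma zeta_ode_derive z : 0 < z ->
  2 * z * Derive (Derive zeta) z
  + (z ^ 2 - / Derive zeta z ^ 2) * Derive (Derive (Derive zeta)) z
  + 2 * Derive (Derive zeta) z ^ 2 / Derive zeta z ^ 3 + C_LP rho / zeta z ^ 2
  - 2 * C_LP rho * z * Derive zeta z / zeta z ^ 3 + 2 * Derive zeta z / zeta z ^ 2 = 0.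
Proof.
  intros Hz. pose proof (zeta_pos z Hz). pose proof (Derive_zeta_pos z Hz).
  transitivity (Derive (LP_zeta_ode_lhs (C_LP rho) zeta) z).
  - symmetry. apply is_derive_unique. unfold LP_zeta_ode_lhs. auto_derive.
    + repeat split; try zeta_ex_derive_tac;
      apply Rgt_not_eq; repeat apply Rmult_lt_0_compat; lra.
    + eta_reduce. field. lra.
  - rewrite (Derive_ext_loc _ (fun _ => 0)); [apply Derive_const|].
    apply (locally_of_pos _ z Hz). exact zeta_ode.
Qed.

Lemma hD_Gam1 w : 0 < w -> hD (Gam1 zeta) w =
  2 / 3 * (zeta w - w * Derive zeta w) / Rpower w (1 / 3)
  - Rpower w (1 / 3) ^ 2 * w * Derive (Derive zeta) w.
Proof.
  intros Hw. unfold hD, Gam1, Lam. apply is_derive_unique.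
  auto_derive; [repeat split; zeta_ex_derive_tac|]. eta_reduce.
  rewrite Rpower_Derive by exact Hw.
  rewrite (Rpower_cuberoot_pow w (2 / 3) 2), (Rpower_cuberoot_inv w (2 / 3 - 1) 1)
    by (simpl; lra).
  pose proof (Rpower_pos w (1 / 3)). field. lra.
Qed.

Lemma hG_zeta w : 0 < w -> hG zeta w = / (Rpower w (1 / 3) ^ 4 * Derive zeta w ^ 2).
Proof.
  intros Hw. unfold hG, hd. rewrite (Rpower_cuberoot_pow w (2 / 3) 2) by (simpl; lra).
  pose proof (Rpower_pos w (1 / 3)). pose proof (Derive_zeta_pos w Hw).
  field. lra.
Qed.

Lemma Kop_Gam1 z : 0 < z -> Kop zeta (Gam1 zeta) z =
  - 10 / 9 * zeta z / (z ^ 2 * Derive zeta z ^ 2) + 10 / (9 * z * Derive zeta z)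
  - 4 * zeta z * Derive (Derive zeta) z / (3 * z * Derive zeta z ^ 3)
  + Derive (Derive zeta) z / (3 * Derive zeta z ^ 2)
  - z * Derive (Derive (Derive zeta)) z / Derive zeta z ^ 2
  + 2 * z * Derive (Derive zeta) z ^ 2 / Derive zeta z ^ 3.
Proof.
  intros Hz. pose proof (zeta_pos z Hz). pose proof (Derive_zeta_pos z Hz).
  pose proof (Rpower_pos z (1 / 3)).
  unfold Kop, hd.
  rewrite (Derive_ext_loc _ (fun w => / (Rpower w (1 / 3) ^ 4 * Derive zeta w ^ 2)
      * (2 / 3 * (zeta w - w * Derive zeta w) / Rpower w (1 / 3)
         - Rpower w (1 / 3) ^ 2 * w * Derive (Derive zeta) w))).
  2:{ apply (locally_of_pos _ z Hz). intros w Hw. now rewrite hG_zeta, hD_Gam1. }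
  erewrite is_derive_unique.
  2:{ auto_derive; [repeat split; try zeta_ex_derive_tac| reflexivity].
      all: apply Rgt_not_eq; repeat apply Rmult_lt_0_compat; lra. }
  eta_reduce. rewrite Rpower_Derive by exact Hz.
  (* all fractional powers of z are powers of u = z^(1/3) *)
  rewrite (Rpower_cuberoot_pow z (2 / 3) 2), (Rpower_cuberoot_inv z (1 / 3 - 1) 2)
    by (simpl; lra).
  pose proof (Rpower_third_pow3 z Hz) as Hcube.
  set (u := Rpower z (1 / 3)) in *. clearbody u. subst z.
  field. repeat split; lra.
Qed.

Lemma Vpot_zeta z : 0 < z -> Vpot rho zeta z =
  10 / (9 * z ^ 2 * Derive zeta z ^ 2)
  + 4 * Derive (Derive zeta) z / (3 * z * Derive zeta z ^ 3)
  - 2 / zeta z ^ 2 + 2 * C_LP rho * z / zeta z ^ 3.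
Proof.
  intros Hz. pose proof (zeta_pos z Hz). pose proof (Derive_zeta_pos z Hz).
  pose proof (Rpower_pos z (1 / 3)).
  unfold Vpot, hG.
  rewrite Rpower_inv_sq_three_halves
    by (unfold hd; apply Rmult_lt_0_compat; [apply Rpower_pos | lra]).
  assert (Hhd : Derive (fun w => Rpower w (2 / 3) * Derive zeta w) z
                = 2 / 3 * Rpower z (2 / 3 - 1) * Derive zeta z
                  + Rpower z (2 / 3) * Derive (Derive zeta) z).
  { apply is_derive_unique. auto_derive; [repeat split; zeta_ex_derive_tac|].
    eta_reduce. rewrite Rpower_Derive by exact Hz. ring. }
  unfold hd. rewrite Hhd.
  rewrite (Rpower_cuberoot_pow z (2 / 3) 2), (Rpower_cuberoot_inv z (2 / 3 - 1) 1),
    (Rpower_cuberoot_inv z (- (2 / 3)) 2), (Rpower_cuberoot_inv z (- (1 / 3)) 1)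
    by (simpl; lra).
  pose proof (Rpower_third_pow3 z Hz) as Hcube.
  set (u := Rpower z (1 / 3)) in *. clearbody u. subst z.
  field. repeat split; lra.
Qed.

Lemma Lop2_Gam z : 0 < z -> Lop2 rho zeta (Gam1 zeta) (Gam2 zeta) z = Gam2 zeta z.
Proof.
  intros Hz. pose proof (zeta_pos z Hz). pose proof (Derive_zeta_pos z Hz).
  assert (HDGam2 : Derive (Gam2 zeta) z = - (2 * z * Derive (Derive zeta) z
                                            + z ^ 2 * Derive (Derive (Derive zeta)) z)).
  { rewrite (Derive_ext_loc _ (fun w => - w ^ 2 * Derive (Derive zeta) w)).
    - apply is_derive_unique. auto_derive; [zeta_ex_derive_tac|]. eta_reduce. ring.
    - apply (locally_of_pos _ z Hz). intros w Hw.
      now apply Gam2_eq, zeta_ex_derive2. }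
  unfold Lop2, Lam at 1. rewrite HDGam2, (Kop_Gam1 z Hz), (Vpot_zeta z Hz).
  rewrite Gam2_eq by now apply zeta_ex_derive2.
  unfold Gam1, Lam.
  pose proof (zeta_ode z Hz) as Hode. unfold LP_zeta_ode_lhs in Hode.
  pose proof (zeta_ode_derive z Hz) as Hode'.
  (* the second component of L Gamma - Gamma is Q + z Q' *)
  apply Rminus_diag_uniq.
  match type of Hode with ?E = 0 => match type of Hode' with ?E' = 0 =>
    transitivity (E + z * E'); [field; repeat split; lra | rewrite Hode, Hode'; ring]
  end end.
Qed.

End Zeta.

Theorem lemmaL (rho om zeta : R -> R) :
  LP_profile rho om -> LP_zeta om zeta ->
  (forall z, 0 < z ->
     Lop1 (Gam1 zeta) (Gam2 zeta) z = Gam1 zeta z /\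
     Lop2 rho zeta (Gam1 zeta) (Gam2 zeta) z = Gam2 zeta z) /\
  (forall z, 0 < z ->
     is_derive (fun T => / (T + 1) * zeta (z * (T + 1))) 0 (- Gam1 zeta z) /\
     is_derive (fun T => hmu zeta (z * (T + 1))) 0 (- Gam2 zeta z)).
Proof.
  intros HP HZ.
  assert (Hsmooth : forall z, 0 < z -> ex_derive zeta z /\ ex_derive (Derive zeta) z)
    by (intros z Hz; split; [apply (zeta_ex_derive om) | apply (zeta_ex_derive2 rho om)];
        assumption).
  split; intros z Hz; destruct (Hsmooth z Hz) as [H1 H2]; split.
  - now apply Lop1_Gam.
  - now apply (Lop2_Gam rho om).
  - now apply is_derive_dilation.
  - now apply is_derive_hmu_dilation.
Qed.
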